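(* Let $\Sigma$ be a signature containing two non-rigid constant symbols $a$ and $b$, and let $M=(W,D,I)$ be a full id-model for $\Sigma$. Then $$M\models\eta \iff D \text{ is finite},$$ where $\eta := \big(\mathrm{dep}(a,b)\wedge \mathrm{dep}(b,a)\wedge \exists^{\mathsf i}x\,(x\neq b)\big)\to \exists^{\mathsf i}x\,(x\neq a)$.
   Context: Inquisitive first-order logic InqBQ. A signature consists of predicate symbols and function symbols, each with an arity; function symbols are either rigid or non-rigid, and function symbols of arity $0$ are constant symbols. Terms are built from variables and function symbols as usual. Formulas are given by $\phi ::= P(t_1,\dots,t_n)\mid (t=t')\mid \bot\mid (\phi\wedge\phi)\mid(\phi\mathbin{\vee\!\!\!\vee}\phi)\mid(\phi\to\phi)\mid\forall x\phi\mid\exists^{\mathsf i}x\phi$, where $\mathbin{\vee\!\!\!\vee}$ is inquisitive disjunction and $\exists^{\mathsf i}$ is the inquisitive existential quantifier. Abbreviations: $\neg\phi:=\phi\to\bot$, $(t\neq t'):=\neg(t=t')$, $?\phi:=\phi\mathbin{\vee\!\!\!\vee}\neg\phi$. Formulas without $\mathbin{\vee\!\!\!\vee}$ and $\exists^{\mathsf i}$ are called classical. An id-model is a triple $M=(W,D,I)$ with $W$ a non-empty set of worlds, $D$ a non-empty domain, and $I$ assigning to each world $w$ an interpretation $I_w$ giving each $n$-ary predicate $P$ a relation $P_w\subseteq D^n$ and each $n$-ary function symbol $f$ a function $f_w:D^n\to D$ (rigid symbols get the same interpretation at every world); equality is interpreted as identity on $D$ at every world. Term values $[t]^g_w$ are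 defined as usual. Support of a formula at a state $s\subseteq W$ under an assignment $g$: $M,s\models_g P(t_1,\dots,t_n)$ iff $([t_1]^g_w,\dots,[t_n]^g_w)\in P_w$ for all $w\in s$; $M,s\models_g t=t'$ iff $[t]^g_w=[t']^g_w$ for all $w\in s$; $M,s\models_g\bot$ iff $s=\emptyset$; $\wedge$ is conjunction of support; $M,s\models_g\phi\mathbin{\vee\!\!\!\vee}\psi$ iff $M,s\models_g\phi$ or $M,s\models_g\psi$; $M,s\models_g\phi\to\psi$ iff for every $t\subseteq s$, $M,t\models_g\phi$ implies $M,t\models_g\psi$; $M,s\models_g\forall x\phi$ iff $M,s\models_{g[x\mapsto d]}\phi$ for all $d\in D$; $M,s\models_g\exists^{\mathsf i}x\phi$ iff $M,s\models_{g[x\mapsto d]}\phi$ for some $d\in D$. For a sentence $\phi$, $M\models\phi$ means $M,W\models\phi$. For a term $t$, $\lambda t:=\exists^{\mathsf i}x\,(x=t)$ with $x$ a variable not occurring in $t$, and $\mathrm{dep}(t,t'):=\lambda t\to\lambda t'$. For an id-model over a signature containing non-rigid constants $a,b$ and a state $s\subseteq W$, let $R_s=\{(a_w,b_w)\mid w\in s\}\subseteq D^2$. The model is full if $R_W=D^2$. *)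

From Stdlib Require Import List.
From mathcomp Require Import all_boot.


Record signature := Signature {
  psym : Type;
  fsym : Type;
  parity : psym -> nat;
  farity : fsym -> nat;
  rigid : fsym -> bool
}.

Section Syntax.
Variable S : signature.

Inductive term : Type :=
  | Tvar : nat -> term
  | Tfun : forall f : fsym S, ('I_(farity S f) -> term) -> term.

Inductive formula : Type :=
  | Fpred : forall p : psym S, ('I_(parity S p) -> term) -> formula
  | Feq : term -> term -> formula
  | Fbot : formula
  | Fand : formula -> formula -> formula
  | Fidis : formula -> formula -> formula
  | Fimp : formula -> formula -> formula
  | Fforall : nat -> formula -> formula
  | Fiex : nat -> formula -> formula.

Definition Fneg (phi : formula) : formula := Fimp phi Fbot.
Definition Fneq (t t' : term) : formula := Fneg (Feq t t').

(** The term consisting of a constant symbol [c] (intended arity 0);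
    the argument function is irrelevant when [farity c = 0]. *)
Definition Tconst (c : fsym S) : term := Tfun c (fun _ => Tvar 0).

(** lambda t := iexists x (x = t), with x a variable not occurring in t. *)
Definition Flambda (x : nat) (t : term) : formula := Fiex x (Feq (Tvar x) t).

Definition Fdep (x : nat) (t t' : term) : formula :=
  Fimp (Flambda x t) (Flambda x t').
End Syntax.

Arguments Tvar {S}.
Arguments Tfun {S}.
Arguments Fpred {S}. Arguments Feq {S}. Arguments Fbot {S}. Arguments Fand {S}.
Arguments Fidis {S}. Arguments Fimp {S}. Arguments Fforall {S}. Arguments Fiex {S}.
Arguments Fneg {S}. Arguments Fneq {S}. Arguments Tconst {S}.
Arguments Flambda {S}. Arguments Fdep {S}.

Record idModel (S : signature) := IdModel {
  world : Type;
  dom : Type;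
  world_ne : inhabited world;
  dom_ne : inhabited dom;
  pint : world -> forall p : psym S, ('I_(parity S p) -> dom) -> Prop;
  fint : world -> forall f : fsym S, ('I_(farity S f) -> dom) -> dom;
  fint_rigid : forall (f : fsym S) (w w' : world),
    rigid S f = true -> fint w f = fint w' f
}.

Section Semantics.
Variables (S : signature) (M : idModel S).

Definition assignment := nat -> dom S M.

Definition upd (g : assignment) (x : nat) (d : dom S M) : assignment :=
  fun y => if y == x then d else g y.

Fixpoint tval (w : world S M) (g : assignment) (t : term S) : dom S M :=
  match t with
  | Tvar x => g x
  | Tfun f args => fint S M w f (fun i => tval w g (args i))
  end.

Definition state := world S M -> Prop.

Fixpoint supp (phi : formula S) (s : state) (g : assignment) : Prop :=
  match phi with
  | Fpred p args => forall w, s w -> pint S M w p (fun i => tval w g (args i))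
  | Feq t t' => forall w, s w -> tval w g t = tval w g t'
  | Fbot => forall w, ~ s w
  | Fand phi psi => supp phi s g /\ supp psi s g
  | Fidis phi psi => supp phi s g \/ supp psi s g
  | Fimp phi psi => forall t : state, (forall w, t w -> s w) ->
                      supp phi t g -> supp psi t g
  | Fforall x phi => forall d, supp phi s (upd g x d)
  | Fiex x phi => exists d, supp phi s (upd g x d)
  end.

(** M |= phi for a sentence phi: support at the full state W
    (under any assignment; for sentences the assignment is irrelevant). *)
Definition models (phi : formula S) : Prop :=
  forall g : assignment, supp phi (fun _ => True) g.

(** The model is full (w.r.t. constants a, b) if R_W = D^2, where
    R_s = {(a_w, b_w) | w in s}. *)
Definition full (a b : fsym S) : Prop :=
  forall (g : assignment) (d1 d2 : dom S M),
    exists w : world S M, tval w g (Tconst a) = d1 /\ tval w g (Tconst b) = d2.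

Definition dom_finite : Prop :=
  exists l : list (dom S M), forall d : dom S M, List.In d l.
End Semantics.
Arguments tval {S M}. Arguments supp {S M}.
Arguments models {S} M. Arguments full {S} M. Arguments dom_finite {S} M.

Definition eta {S : signature} (a b : fsym S) : formula S :=
  Fimp (Fand (Fdep 0 (Tconst a) (Tconst b))
             (Fand (Fdep 0 (Tconst b) (Tconst a))
                   (Fiex 0 (Fneq (Tvar 0) (Tconst b)))))
       (Fiex 0 (Fneq (Tvar 0) (Tconst a))).

From mathcomp Require Import ssreflect ssrfun ssrbool eqtype ssrnat.
From Stdlib Require Import List Classical ClassicalEpsilon FunctionalExtensionality FinFun.

(* For constants, a state t determines the relation R_t = {(a_w, b_w) | w in t}.
   The antecedent of eta holds at t iff R_t is the graph of a bijection between
   its two projections and the b-projection is not all of D; the consequent says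
   the a-projection is not all of D.  If D is finite, an R_t with full
   a-projection is the graph of an injective total map D -> D, hence surjective.
   If D is infinite, it carries an injective non-surjective map h, and by
   fullness the state {w | b_w = h a_w} has full a-projection. *)

Section Dedekind.
Variable T : Type.

Section FromNat.
Variables (f : nat -> T) (f_inj : Injective f).

Definition shift (x : T) : T :=
  match excluded_middle_informative (exists n, f n = x) with
  | left fx => f (S (proj1_sig (constructive_indefinite_description _ fx)))
  | right _ => x
  end.

Lemma shiftP (x : T) :
  (exists n, f n = x /\ shift x = f (S n)) \/ ((forall n, f n <> x) /\ shift x = x).
Proof.
rewrite /shift; case: excluded_middle_informative => [fx | nfx].
- by case: constructive_indefinite_description => n /= fn; left; exists n.
- by right; split=> // n fn; apply: nfx; exists n.
Qed.

Lemma shift_inj : Injective shift.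
Proof.
move=> x y; case: (shiftP x) => [[m [<- ->]] | [nx ->]];
  case: (shiftP y) => [[n [<- ->]] | [ny ->]].
- by move/f_inj=> [->].
- by move=> fy; case: (ny (S m)).
- by move=> xf; case: (nx (S n)).
- by [].
Qed.

Lemma shift_neq_f0 (x : T) : shift x <> f 0.
Proof.
case: (shiftP x) => [[n [_ ->]] /f_inj // | [nx ->] x0].
by apply: (nx 0).
Qed.

End FromNat.

Section NotFinite.
Hypothesis T_infinite : ~ Finite T.

Lemma not_finite_fresh (l : list T) : exists x, ~ In x l.
Proof.
apply: NNPP => all_in; apply: T_infinite; exists l => x.
by apply: NNPP => nx; apply: all_in; exists x.
Qed.

Definition fresh (l : list T) : T :=
  proj1_sig (constructive_indefinite_description _ (not_finite_fresh l)).

Lemma fresh_notin (l : list T) : ~ In (fresh l) l.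
Proof. exact: proj2_sig (constructive_indefinite_description _ (not_finite_fresh l)). Qed.

Fixpoint fresh_prefix (n : nat) : list T :=
  if n is m.+1 then fresh (fresh_prefix m) :: fresh_prefix m else nil.

Definition fresh_seq (n : nat) : T := fresh (fresh_prefix n).

Lemma fresh_seq_in_prefix (m n : nat) : m < n -> In (fresh_seq m) (fresh_prefix n).
Proof.
elim: n => // n IHn; rewrite ltnS leq_eqVlt => /orP[/eqP -> | lt_mn] /=.
- by left.
- by right; apply: IHn.
Qed.

Lemma fresh_seq_inj : Injective fresh_seq.
Proof.
have neq m n : m < n -> fresh_seq m <> fresh_seq n.
  move=> lt_mn eq_mn; apply: (fresh_notin (fresh_prefix n)).
  by rewrite -/(fresh_seq n) -eq_mn; apply: fresh_seq_in_prefix.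
move=> m n eq_mn; case: (ltngtP m n) => // [lt_mn | lt_nm].
- by case: (neq _ _ lt_mn).
- by case: (neq _ _ lt_nm).
Qed.

End NotFinite.

Lemma not_finite_dedekind :
  ~ Finite T -> exists h : T -> T, Injective h /\ exists d, forall x, h x <> d.
Proof.
move=> T_infinite; have f_inj := fresh_seq_inj T_infinite.
exists (shift (fresh_seq T_infinite)); split; first exact: shift_inj.
by exists (fresh_seq T_infinite 0); apply: shift_neq_f0.
Qed.

End Dedekind.

Section PairsOfMaps.
Variables (W D : Type) (A B : W -> D).

Definition determines (U V : W -> D) (t : W -> Prop) : Prop :=
  forall w1 w2, t w1 -> t w2 -> U w1 = U w2 -> V w1 = V w2.

Definition misses (U : W -> D) (t : W -> Prop) : Prop :=
  exists d, forall w, t w -> U w <> d.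

Lemma finite_misses (t : W -> Prop) : Finite D ->
  determines B A t -> misses B t -> misses A t.
Proof.
move=> D_fin BA [d0 B_d0]; apply: NNPP => A_onto.
have preim d : exists w, t w /\ A w = d.
  apply: NNPP => nd; apply: A_onto; exists d => w tw Aw.
  by apply: nd; exists w.
pose pick d := proj1_sig (constructive_indefinite_description _ (preim d)).
have pickP d : t (pick d) /\ A (pick d) = d.
  exact: proj2_sig (constructive_indefinite_description _ (preim d)).
have Bpick_inj : Injective (fun d => B (pick d)).
  move=> d1 d2 eqB; case: (pickP d1) => t1 <-; case: (pickP d2) => t2 <-.
  exact: BA.
have dec : ListDec.decidable_eq D by move=> x y; apply: classic.
have [d Bd] := proj1 (Endo_Injective_Surjective D_fin dec _) Bpick_inj d0.
by apply: (B_d0 (pick d)); [case: (pickP d) | ].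
Qed.

Lemma full_graph_counterexample (h : D -> D) :
  (forall d1 d2, exists w, A w = d1 /\ B w = d2) ->
  Injective h -> (exists d, forall x, h x <> d) ->
  let t := fun w => B w = h (A w) in
  [/\ determines A B t, determines B A t, misses B t & ~ misses A t].
Proof.
move=> full h_inj [d0 h_d0] t; split.
- by move=> w1 w2 -> -> ->.
- by move=> w1 w2 -> -> /h_inj.
- by exists d0 => w ->.
- case=> d A_d; have [w [Aw Bw]] := full d (h d).
  by apply: (A_d w); rewrite // /t Aw.
Qed.

End PairsOfMaps.

Arguments determines {W D}.
Arguments misses {W D}.
Arguments finite_misses {W D A B t}.
Arguments full_graph_counterexample {W D A B h}.

Section Support.
Variables (S : signature) (M : idModel S) (g : assignment S M).

Let val (c : fsym S) (w : world S M) : dom S M := tval w g (Tconst c).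

Lemma tval_const (c : fsym S) : farity S c = 0 ->
  forall w g', tval w g' (Tconst c) = val c w.
Proof.
move=> c0 w g' /=; congr (fint _ _ _ _); apply: functional_extensionality => i.
by case: i; rewrite c0.
Qed.

Lemma tval_upd_var (g' : assignment S M) x d w : tval w (upd S M g' x d) (Tvar x) = d.
Proof. by rewrite /= /upd eqxx. Qed.

Lemma supp_lambda x c s : farity S c = 0 ->
  supp (Flambda x (Tconst c)) s g <-> exists d, forall w, s w -> val c w = d.
Proof.
by move=> c0; split=> -[d sd]; exists d => w /sd; rewrite tval_upd_var tval_const.
Qed.

Lemma supp_dep x c c' s : farity S c = 0 -> farity S c' = 0 ->
  supp (Fdep x (Tconst c) (Tconst c')) s g <-> determines (val c) (val c') s.
Proof.
move=> c0 c'0; rewrite /Fdep; cbn [supp]; split.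
- move=> dep w1 w2 s1 s2 eq12; pose u w := w = w1 \/ w = w2.
  have u_sub w : u w -> s w by case=> ->.
  have c_const : supp (Flambda x (Tconst c)) u g.
    by apply/(supp_lambda _ _ _ c0); exists (val c w1) => w [] ->.
  have [d c'd] := (supp_lambda _ _ _ c'0).1 (dep u u_sub c_const).
  by rewrite (c'd w1) ?(c'd w2) /u; [| right | left].
- move=> det u us /(supp_lambda _ _ _ c0) [d cd]; apply/(supp_lambda _ _ _ c'0).
  case: (classic (exists w0, u w0)) => [[w0 uw0] | empty].
  + by exists (val c' w0) => w uw; apply: det; rewrite ?cd; auto.
  + by exists (g x) => w uw; case: empty; exists w.
Qed.

Lemma supp_exists_neq x c s : farity S c = 0 ->
  supp (Fiex x (Fneq (Tvar x) (Tconst c))) s g <-> misses (val c) s.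
Proof.
move=> c0; rewrite /Fneq /Fneg; cbn [supp]; split=> -[d neq]; exists d.
- move=> w sw cw; apply: (neq (fun w' => w' = w) _ _ w erefl) => w' -> //.
  by rewrite tval_upd_var tval_const.
- move=> u us eq w uw; apply: (neq w (us w uw)).
  by have := eq w uw; rewrite tval_upd_var tval_const.
Qed.

Lemma supp_eta a b s : farity S a = 0 -> farity S b = 0 ->
  supp (eta a b) s g <->
  (forall t, (forall w, t w -> s w) ->
     determines (val a) (val b) t -> determines (val b) (val a) t ->
     misses (val b) t -> misses (val a) t).
Proof.
move=> a0 b0; rewrite /eta; cbn [supp]; split=> eta_s t ts.
- move=> ab ba nb; apply/(supp_exists_neq _ _ _ a0)/eta_s => //.
  rewrite !supp_dep //; split=> //; split=> //.
  exact/(supp_exists_neq _ _ _ b0).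
- rewrite !supp_dep // => -[ab [ba /(supp_exists_neq _ _ _ b0) nb]].
  exact/(supp_exists_neq _ _ _ a0)/eta_s.
Qed.

End Support.

Theorem mainTheorem1 (S : signature) (a b : fsym S)
  (Ha0 : farity S a = 0) (Hb0 : farity S b = 0)
  (Har : rigid S a = false) (Hbr : rigid S b = false)
  (M : idModel S) (Hfull : full M a b) :
  models M (eta a b) <-> dom_finite M.
Proof.
split.
- move=> eta_true; apply: NNPP => /not_finite_dedekind [h [h_inj h_miss]].
  have [d] := dom_ne S M; pose g := fun _ : nat => d.
  have [ab ba nb na] := full_graph_counterexample (Hfull g) h_inj h_miss.
  by apply: na; move: (eta_true g); rewrite supp_eta //; apply.
- by move=> D_fin g; apply/supp_eta => // t _ _; apply: finite_misses.
Qed.
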